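(* If $X$ is a topological space satisfying ${\sf S}_1(\mathcal{G}_K,\mathcal{G}_\Gamma)$, then $X$ is productively Lindel\''of, productively Menger, and productively Hurewicz.
   Context: All spaces are infinite ${\sf T}_1$ topological spaces. $\mathcal{G}_K$ is the family of all collections $\mathcal{U}$ of ${\sf G}_\delta$ subsets of $X$ with $X\notin\mathcal{U}$ such that each compact subset of $X$ is contained in some member of $\mathcal{U}$. $\mathcal{G}_\Gamma$ is the family of infinite collections $\mathcal{U}$ of ${\sf G}_\delta$ subsets of $X$ such that every infinite subcollection of $\mathcal{U}$ covers $X$. ${\sf S}_1(\mathcal{A},\mathcal{B})$: for each sequence $(A_n)$ of elements of $\mathcal{A}$ there are $B_n\in A_n$ with $\{B_n:n\in\mathbb{N}\}\in\mathcal{B}$. A space is Menger if for each sequence $(\mathcal{U}_n)$ of open covers there are finite $\mathcal{V}_n\subseteq\mathcal{U}_n$ with $\bigcup_n\mathcal{V}_n$ a cover; it is Hurewicz if for each sequence $(\mathcal{U}_n)$ of open covers there are finite $\mathcal{V}_n\subseteq\mathcal{U}_n$ such that each point belongs to $\bigcup\mathcal{V}_n$ for all but finitely many $n$. For a property ${\sf Q}$, $X$ is productively ${\sf Q}$ if $X\times Y$ has ${\sf Q}$ for every space $Y$ having ${\sf Q}$. *)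

From Stdlib Require Import List Arith.
Import ListNotations.

Definition set (T : Type) := T -> Prop.

Definition seteq {T : Type} (A B : set T) : Prop := forall x, A x <-> B x.

Definition is_topology {T : Type} (op : set T -> Prop) : Prop :=
  op (fun _ => True) /\
  op (fun _ => False) /\
  (forall U V, op U -> op V -> op (fun x => U x /\ V x)) /\
  (forall F : set T -> Prop, (forall U, F U -> op U) ->
     op (fun x => exists U, F U /\ U x)) /\
  (forall U V, seteq U V -> op U -> op V).

Definition T1_space {T : Type} (op : set T -> Prop) : Prop :=
  forall x y : T, x <> y -> exists U, op U /\ U x /\ ~ U y.

Definition infinite_type (T : Type) : Prop :=
  forall l : list T, exists x, ~ In x l.

Definition prod_open {T T' : Type} (op : set T -> Prop) (op' : set T' -> Prop)
  (W : set (T * T')) : Prop :=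
  forall p, W p -> exists U V, op U /\ op' V /\ U (fst p) /\ V (snd p) /\
    (forall a b, U a -> V b -> W (a, b)).

Definition Gdelta {T : Type} (op : set T -> Prop) (A : set T) : Prop :=
  exists U : nat -> set T, (forall n, op (U n)) /\ (forall x, A x <-> forall n, U n x).

Definition compact_subset {T : Type} (op : set T -> Prop) (K : set T) : Prop :=
  forall F : set T -> Prop, (forall U, F U -> op U) ->
    (forall x, K x -> exists U, F U /\ U x) ->
    exists l : list (set T), (forall U, In U l -> F U) /\
      (forall x, K x -> exists U, In U l /\ U x).

Definition covers {T : Type} (C : set T -> Prop) : Prop :=
  forall x : T, exists U, C U /\ U x.

Definition open_cover {T : Type} (op : set T -> Prop) (C : set T -> Prop) : Prop :=
  (forall U, C U -> op U) /\ covers C.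

Definition infinite_coll {T : Type} (C : set T -> Prop) : Prop :=
  forall l : list (set T), exists U, C U /\ forall V, In V l -> ~ seteq U V.

Definition in_GK {T : Type} (op : set T -> Prop) (C : set T -> Prop) : Prop :=
  (forall U, C U -> Gdelta op U) /\
  ~ (exists U, C U /\ seteq U (fun _ => True)) /\
  (forall K, compact_subset op K -> exists U, C U /\ forall x, K x -> U x).

Definition in_GGamma {T : Type} (op : set T -> Prop) (C : set T -> Prop) : Prop :=
  infinite_coll C /\
  (forall U, C U -> Gdelta op U) /\
  (forall D : set T -> Prop, (forall U, D U -> C U) -> infinite_coll D -> covers D).

Definition S1_GK_GGamma {T : Type} (op : set T -> Prop) : Prop :=
  forall A : nat -> (set T -> Prop), (forall n, in_GK op (A n)) ->
    exists B : nat -> set T, (forall n, A n (B n)) /\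
      in_GGamma op (fun U => exists n, seteq U (B n)).

Definition Lindelof {T : Type} (op : set T -> Prop) : Prop :=
  forall C, open_cover op C ->
    exists f : nat -> set T, (forall n, C (f n)) /\ forall x, exists n, f n x.

Definition Menger {T : Type} (op : set T -> Prop) : Prop :=
  forall C : nat -> (set T -> Prop), (forall n, open_cover op (C n)) ->
    exists V : nat -> list (set T), (forall n U, In U (V n) -> C n U) /\
      forall x, exists n U, In U (V n) /\ U x.

Definition Hurewicz {T : Type} (op : set T -> Prop) : Prop :=
  forall C : nat -> (set T -> Prop), (forall n, open_cover op (C n)) ->
    exists V : nat -> list (set T), (forall n U, In U (V n) -> C n U) /\
      forall x, exists N, forall n, N <= n -> exists U, In U (V n) /\ U x.

(* X is productively Q: X x Y has Q for every space Y (infinite T1, per the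
   paper's standing convention) having Q. *)
Definition productively
  (Q : forall T : Type, (set T -> Prop) -> Prop) {T : Type} (op : set T -> Prop) : Prop :=
  forall (T' : Type) (op' : set T' -> Prop),
    is_topology op' -> T1_space op' -> infinite_type T' ->
    Q T' op' -> Q (T * T')%type (prod_open op op').

(* The three properties are instances of one "selection property": for every
   sequence (C_n) of open covers (constant sequences only, in the Lindelöf
   case) there are finite F_n ⊆ C_n such that every point x satisfies
   P (fun n => x ∈ ⋃ F_n), where P is "for some n" (Lindelöf, Menger) or "for
   all but finitely many n" (Hurewicz).  Both predicates are monotone and
   invariant under shifting the index, and this is all the argument uses.

   Fix covers (W_n) of X × Y.  A generalized tube lemma shows that for a
   compact K ⊆ X the open V ⊆ Y such that some open U ⊇ K has U × V covered
   by finitely many members of W_n form an open cover of Y; applying the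
   selection property of Y to these covers yields a G_delta set G ⊇ K such
   that G × Y is P-covered by finite selections from (W_n).  The hypothesis
   S_1(G_K, G_Gamma), applied to the constant sequence of all such sets G,
   gives countably many of them covering X; the selections attached to the
   m-th one, started at index m, are finally merged along diagonals. *)

From Stdlib Require Import List Lia Cantor Classical ClassicalEpsilon.
Import ListNotations.

Definition union_of {A : Type} (l : list (set A)) : set A :=
  fun p => exists U, In U l /\ U p.

Lemma choice_on {A B : Type} (D : A -> Prop) (R : A -> B -> Prop) :
  inhabited B -> (forall a, D a -> exists b, R a b) ->
  exists f : A -> B, forall a, D a -> R a (f a).
Proof.
  intros [b0] HR.
  apply (choice (fun a b => D a -> R a b)). intro a.
  destruct (classic (D a)) as [Ha | Ha].
  - destruct (HR a Ha) as [b Hb]. exists b. auto.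
  - exists b0. intro. contradiction.
Qed.

Section OpenSets.
Context {T : Type} (op : set T -> Prop) (Htop : is_topology op).

Lemma open_finite_inter {I : Type} (l : list I) (f : I -> set T) :
  (forall i, In i l -> op (f i)) -> op (fun x => forall i, In i l -> f i x).
Proof.
  destruct Htop as (Hfull & _ & Hinter & _ & Hext).
  induction l as [| i l IH]; intro Hl.
  - apply (Hext (fun _ => True)); [| exact Hfull].
    intro x. simpl. tauto.
  - apply (Hext (fun x => f i x /\ forall j, In j l -> f j x)).
    + intro x. simpl. split.
      * intros [Hi Hl'] j [<- | Hj]; auto.
      * intro H. auto.
    + apply Hinter; [apply Hl; simpl; auto |].
      apply IH. intros j Hj. apply Hl. simpl. auto.
Qed.

Lemma Gdelta_countable_inter (G : nat -> set T) :
  (forall j, Gdelta op (G j)) -> Gdelta op (fun x => forall j, G j x).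
Proof.
  intro HG. apply choice in HG as [U HU].
  exists (fun m => U (fst (of_nat m)) (snd (of_nat m))). split.
  - intro m. apply HU.
  - intro x. split.
    + intros Hx m. apply (HU _). apply Hx.
    + intros Hx j. apply (HU j). intro k.
      specialize (Hx (to_nat (j, k))). rewrite cancel_of_to in Hx. exact Hx.
Qed.

(* Alster-type consequence of S_1(G_K, G_Gamma): if every compact set lies in
   a G_delta set with property Good, then countably many G_delta sets with
   property Good cover the space. *)
Lemma S1_countable_Gdelta_cover (Good : set T -> Prop) :
  S1_GK_GGamma op ->
  (forall K, compact_subset op K ->
     exists G, Gdelta op G /\ (forall x, K x -> G x) /\ Good G) ->
  exists Gs : nat -> set T, (forall m, Good (Gs m)) /\ forall x, exists m, Gs m x.
Proof.
  intros HS1 Hcpt.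
  set (D := fun G => Gdelta op G /\ Good G).
  destruct (classic (exists G, D G /\ seteq G (fun _ => True)))
    as [[G [[_ HG] Hfull]] | Hnot_full].
  - exists (fun _ => G). split; [auto |]. intro x. exists 0. apply Hfull. exact I.
  - assert (HD : in_GK op D).
    { split; [| split]; [intros G [HG _]; exact HG | exact Hnot_full |].
      intros K HK. destruct (Hcpt K HK) as (G & HG & HKG & HGood).
      exists G. split; [split |]; assumption. }
    destruct (HS1 (fun _ => D) (fun _ => HD)) as [B [HB [Hinf [_ Hcov]]]].
    exists B. split; [intro m; apply HB |].
    intro x. destruct (Hcov _ (fun U H => H) Hinf x) as [U [[m Hm] HUx]].
    exists m. apply Hm, HUx.
Qed.

End OpenSets.

Definition selects {A : Type} (op : set A -> Prop) (const_only : bool)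
  (P : (nat -> Prop) -> Prop) : Prop :=
  forall C : nat -> (set A -> Prop), (forall n, open_cover op (C n)) ->
    (const_only = true -> forall n, C n = C 0) ->
    exists F : nat -> list (set A), (forall n U, In U (F n) -> C n U) /\
      forall x, P (fun n => union_of (F n) x).

Definition monotone_pred (P : (nat -> Prop) -> Prop) : Prop :=
  forall S S' : nat -> Prop, (forall n, S n -> S' n) -> P S -> P S'.

Definition shift_invariant (P : (nat -> Prop) -> Prop) : Prop :=
  forall (S : nat -> Prop) j, P (fun n => S (n + j)) -> P S.

Definition some_index (S : nat -> Prop) : Prop := exists n, S n.
Definition eventually (S : nat -> Prop) : Prop := exists N, forall n, N <= n -> S n.

Lemma some_index_monotone : monotone_pred some_index.
Proof. intros S S' H [n Hn]. exists n. apply H, Hn. Qed.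

Lemma some_index_shift : shift_invariant some_index.
Proof. intros S j [n Hn]. exists (n + j). exact Hn. Qed.

Lemma eventually_monotone : monotone_pred eventually.
Proof. intros S S' H [N HN]. exists N. intros n Hn. apply H, HN, Hn. Qed.

Lemma eventually_shift : shift_invariant eventually.
Proof.
  intros S j [N HN]. exists (N + j). intros n Hn.
  replace n with (n - j + j) by lia. apply HN. lia.
Qed.

Lemma Menger_selects {A : Type} (op : set A -> Prop) :
  Menger op <-> selects op false some_index.
Proof.
  split.
  - intros H C HC _. exact (H C HC).
  - intros H C HC. apply (H C HC). discriminate.
Qed.

Lemma Hurewicz_selects {A : Type} (op : set A -> Prop) :
  Hurewicz op <-> selects op false eventually.
Proof.
  split.
  - intros H C HC _. exact (H C HC).
  - intros H C HC. apply (H C HC). discriminate.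
Qed.

Lemma Lindelof_selects {A : Type} (op : set A -> Prop) :
  Lindelof op -> selects op true some_index.
Proof.
  intros H C HC Hconst.
  destruct (H (C 0) (HC 0)) as [f [Hf Hcov]].
  exists (fun n => [f n]). split.
  - intros n U [<- | []]. rewrite (Hconst eq_refl n). apply Hf.
  - intro x. destruct (Hcov x) as [n Hn]. exists n, (f n). simpl. auto.
Qed.

(* Conversely the finite selections can be enumerated; a point of the space
   provides a member of the cover used to pad the enumeration. *)
Lemma selects_Lindelof {A : Type} (op : set A -> Prop) :
  inhabited A -> selects op true some_index -> Lindelof op.
Proof.
  intros [a0] H C HC.
  destruct (H (fun _ => C) (fun _ => HC) (fun _ _ => eq_refl)) as [F [HF Hcov]].
  destruct (proj2 HC a0) as [U0 [HU0 _]].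
  exists (fun k => nth (snd (of_nat k)) (F (fst (of_nat k))) U0). split.
  - intro k. destruct (nth_in_or_default (snd (of_nat k)) (F (fst (of_nat k))) U0)
      as [Hin | Hdef].
    + exact (HF _ _ Hin).
    + rewrite Hdef. exact HU0.
  - intro x. destruct (Hcov x) as [n [U [HU HUx]]].
    apply In_nth with (d := U0) in HU as [i [_ Hi]].
    exists (to_nat (n, i)). rewrite cancel_of_to. simpl. rewrite Hi. exact HUx.
Qed.

Definition diagonal {A : Type} (R : nat -> nat -> list A) (n : nat) : list A :=
  flat_map (fun m => R m (n - m)) (seq 0 (S n)).

Lemma diagonal_intro {A : Type} (R : nat -> nat -> list A) m n a :
  In a (R m n) -> In a (diagonal R (n + m)).
Proof.
  intro Ha. apply in_flat_map. exists m. split.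
  - apply in_seq. lia.
  - replace (n + m - m) with n by lia. exact Ha.
Qed.

Lemma diagonal_elim {A : Type} (R : nat -> nat -> list A) n a :
  In a (diagonal R n) -> exists m, m <= n /\ In a (R m (n - m)).
Proof.
  intro Ha. apply in_flat_map in Ha as [m [Hm Ha]].
  apply in_seq in Hm. exists m. split; [lia | exact Ha].
Qed.

Section Product.
Context {T T' : Type} (op : set T -> Prop) (op' : set T' -> Prop)
  (Htop : is_topology op) (Htop' : is_topology op').

Definition tube (W : set (T * T') -> Prop) (K : set T) (U : set T) (V : set T')
  (l : list (set (T * T'))) : Prop :=
  op U /\ op' V /\ (forall a, K a -> U a) /\ (forall A, In A l -> W A) /\
  forall a b, U a -> V b -> union_of l (a, b).

Lemma finite_slab (W : set (T * T') -> Prop) (y : T') (l : list (set T)) :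
  (forall U, In U l -> exists V A, op' V /\ V y /\ W A /\
     forall a b, U a -> V b -> A (a, b)) ->
  exists V l', op' V /\ V y /\ (forall A, In A l' -> W A) /\
    forall a b, union_of l a -> V b -> union_of l' (a, b).
Proof.
  destruct Htop' as (Hfull & _ & Hinter & _ & _).
  induction l as [| U l IH]; intro Hl.
  - exists (fun _ => True), []. split; [exact Hfull |]. split; [exact I |].
    split; [intros A [] |]. intros a b [U [[] _]].
  - destruct (Hl U (or_introl eq_refl)) as (VU & AU & HVU & HyU & HAU & HUV).
    destruct IH as (V & l' & HV & Hy & Hl' & HVl').
    { intros U' HU'. apply Hl. right. exact HU'. }
    exists (fun b => VU b /\ V b), (AU :: l'). split; [apply Hinter; assumption |].
    split; [split; assumption |]. split; [intros A [<- | HA]; auto |].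
    intros a b [U' [[<- | HU'] Ha]] [Hb Hb'].
    + exists AU. split; [left; reflexivity | apply HUV; assumption].
    + destruct (HVl' a b (ex_intro _ U' (conj HU' Ha)) Hb') as [A [HA HAab]].
      exists A. split; [right |]; assumption.
Qed.

Lemma tube_lemma (W : set (T * T') -> Prop) (K : set T) (y : T') :
  open_cover (prod_open op op') W -> compact_subset op K ->
  exists V U l, V y /\ tube W K U V l.
Proof.
  intros [HWopen HWcov] HK.
  set (F := fun U => op U /\ exists V A, op' V /\ V y /\ W A /\
                       forall a b, U a -> V b -> A (a, b)).
  destruct (HK F) as [l [HlF HlK]].
  - intros U [HU _]. exact HU.
  - intros a _. destruct (HWcov (a, y)) as [A [HA HAay]].
    destruct (HWopen A HA _ HAay) as (U & V & HU & HV & HUa & HVy & HUV).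
    exists U. split; [split; [exact HU |] |]; [exists V, A; auto | exact HUa].
  - destruct (finite_slab W y l) as (V & l' & HV & Hy & Hl' & Hcov).
    { intros U HU. apply (HlF U HU). }
    exists V, (union_of l), l'. split; [exact Hy |].
    split; [| split; [exact HV | split; [exact HlK | split; assumption]]].
    destruct Htop as (_ & _ & _ & Hunion & _).
    apply Hunion. intros U HU. apply (HlF U HU).
Qed.

Definition tube_cover (W : set (T * T') -> Prop) (K : set T) : set T' -> Prop :=
  fun V => exists U l, tube W K U V l.

Lemma tube_cover_open_cover (W : set (T * T') -> Prop) (K : set T) :
  open_cover (prod_open op op') W -> compact_subset op K ->
  open_cover op' (tube_cover W K).
Proof.
  intros HW HK. split.
  - intros V (U & l & _ & HV & _). exact HV.
  - intro y. destruct (tube_lemma W K y HW HK) as (V & U & l & Hy & Ht).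
    exists V. split; [exists U, l |]; assumption.
Qed.

Context (const_only : bool) (P : (nat -> Prop) -> Prop)
  (HPmono : monotone_pred P) (HY : selects op' const_only P).

Definition controls (W : nat -> (set (T * T') -> Prop)) (G : set T) : Prop :=
  exists R : nat -> list (set (T * T')), (forall n A, In A (R n) -> W n A) /\
    forall x y, G x -> P (fun n => union_of (R n) (x, y)).

Definition product_covers (W : nat -> (set (T * T') -> Prop)) : Prop :=
  (forall n, open_cover (prod_open op op') (W n)) /\
  (const_only = true -> forall n, W n = W 0).

(* Each compact set lies in a G_delta set controlled by W: select, in Y, from
   the covers by tubes over K, and intersect the corresponding open U's. *)
Lemma Gdelta_controlled (W : nat -> (set (T * T') -> Prop)) (K : set T) :
  product_covers W -> compact_subset op K ->
  exists G, Gdelta op G /\ (forall a, K a -> G a) /\ controls W G.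
Proof.
  intros [HW Hconst] HK.
  destruct (HY (fun n => tube_cover (W n) K)) as [sel [Hsel Hcov]].
  - intro n. exact (tube_cover_open_cover (W n) K (HW n) HK).
  - intros Hb n. rewrite (Hconst Hb n). reflexivity.
  - destruct (choice_on (fun nV => tube_cover (W (fst nV)) K (snd nV))
      (fun nV Ul => tube (W (fst nV)) K (fst Ul) (snd nV) (snd Ul)))
      as [g Hg].
    { constructor. exact ((fun _ => True), []). }
    { intros [n V] [U [l Ht]]. exists (U, l). exact Ht. }
    set (Ug := fun n V => fst (g (n, V))).
    assert (Htube : forall n V, In V (sel n) -> tube (W n) K (Ug n V) V (snd (g (n, V)))).
    { intros n V HV. exact (Hg (n, V) (Hsel n V HV)). }
    exists (fun x => forall n V, In V (sel n) -> Ug n V x). split; [| split].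
    + exists (fun n x => forall V, In V (sel n) -> Ug n V x). split; [| intro x; tauto].
      intro n. apply (open_finite_inter op Htop).
      intros V HV. apply (Htube n V HV).
    + intros a Ha n V HV. apply (Htube n V HV). exact Ha.
    + exists (fun n => flat_map (fun V => snd (g (n, V))) (sel n)). split.
      * intros n A HA. apply in_flat_map in HA as [V [HV HA]].
        apply (Htube n V HV). exact HA.
      * intros x y Hx. refine (HPmono _ _ _ (Hcov y)). intros n [V [HV HVy]].
        destruct (Htube n V HV) as (_ & _ & _ & _ & Hrect).
        destruct (Hrect x y (Hx n V HV) HVy) as [A [HA HAxy]].
        exists A. split; [apply in_flat_map; exists V |]; auto.
Qed.

Lemma controls_sub (W : nat -> (set (T * T') -> Prop)) (G G' : set T) :
  (forall x, G' x -> G x) -> controls W G -> controls W G'.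
Proof. intros Hsub [R [HR HP]]. exists R. split; [exact HR |]. eauto. Qed.

Lemma Gdelta_controls_tails (W : nat -> (set (T * T') -> Prop)) (K : set T) :
  product_covers W -> compact_subset op K ->
  exists G, Gdelta op G /\ (forall a, K a -> G a) /\
    forall j, controls (fun n => W (n + j)) G.
Proof.
  intros [HW Hconst] HK.
  assert (Htail : forall j, exists G, Gdelta op G /\ (forall a, K a -> G a) /\
                    controls (fun n => W (n + j)) G).
  { intro j. apply Gdelta_controlled; [split |]; [intro n; apply HW | | exact HK].
    intros Hb n. simpl. rewrite (Hconst Hb (n + j)), (Hconst Hb j). reflexivity. }
  apply choice in Htail as [G HG].
  exists (fun x => forall j, G j x). split; [| split].
  - apply Gdelta_countable_inter. intro j. apply HG.
  - intros a Ha j. apply HG. exact Ha.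
  - intro j. apply (controls_sub _ (G j)); [auto | apply HG].
Qed.

End Product.

Theorem product_selects {T T' : Type} (op : set T -> Prop) (op' : set T' -> Prop)
  (const_only : bool) (P : (nat -> Prop) -> Prop) :
  is_topology op -> is_topology op' -> S1_GK_GGamma op ->
  monotone_pred P -> shift_invariant P ->
  selects op' const_only P -> selects (prod_open op op') const_only P.
Proof.
  intros Htop Htop' HS1 HPmono HPshift HY W HW Hconst.
  set (Good := fun G => forall j, controls P (fun n => W (n + j)) G).
  destruct (S1_countable_Gdelta_cover op Good HS1) as [Gs [HGood HGcov]].
  { intros K HK. apply (Gdelta_controls_tails op op' Htop Htop' const_only P HPmono HY);
      [split |]; assumption. }
  assert (HR : forall m, exists R : nat -> list (set (T * T')),
             (forall n A, In A (R n) -> W (n + m) A) /\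
             forall x y, Gs m x -> P (fun n => union_of (R n) (x, y))).
  { intro m. exact (HGood m m). }
  apply choice in HR as [R HR].
  exists (diagonal R). split.
  - intros n A HA. apply diagonal_elim in HA as [m [Hmn HA]].
    apply (proj1 (HR m)) in HA. replace (n - m + m) with n in HA by lia. exact HA.
  - intros [x y]. destruct (HGcov x) as [m Hm]. apply (HPshift _ m).
    refine (HPmono _ _ _ (proj2 (HR m) x y Hm)).
    intros n [A [HA HAp]]. exists A. split; [apply diagonal_intro |]; assumption.
Qed.

Theorem theorem4p12 (T : Type) (op : set T -> Prop)
  (Htop : is_topology op) (HT1 : T1_space op) (Hinf : infinite_type T)
  (HS1 : S1_GK_GGamma op) :
  productively (@Lindelof) op /\ productively (@Menger) op /\
  productively (@Hurewicz) op.
Proof.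
  split; [| split]; intros T' op' Htop' _ Hinf' HQ.
  - apply selects_Lindelof.
    + destruct (Hinf []) as [x _]. destruct (Hinf' []) as [y _].
      exact (inhabits (x, y)).
    + apply product_selects; auto using some_index_monotone,
        some_index_shift, Lindelof_selects.
  - apply Menger_selects, product_selects; auto using some_index_monotone,
      some_index_shift. apply Menger_selects. exact HQ.
  - apply Hurewicz_selects, product_selects; auto using eventually_monotone,
      eventually_shift. apply Hurewicz_selects. exact HQ.
Qed.
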